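(* Let $\rho=(a,2t,b)$, i.e. $\rho(x,y)=ax^2+2txy+by^2$, be a positive definite binary quadratic form with $(2t)^2-4ab=-4\Omega C<0$, such that $2\parallel t$ and $\gcd(a,2t,b)=4$. Assume that $C=2$ or $C$ is twice an odd prime, that $\Omega>0$ is even, and let $\Delta>0$ be an odd integer with $\gcd(C,\Delta)=1$ such that the congruences $$R^2+\Delta a\equiv 0,\qquad RS-\Delta t\equiv 0,\qquad S^2+\Delta b\equiv 0 \pmod C$$ are solvable in integers $R,S$. Then $\rho$ is properly represented by a positive definite properly primitive ternary quadratic form $f$ with invariants $\Omega$ and $\Delta$, and the reciprocal $F$ of $f$ is improperly primitive.
   Context: A ternary quadratic form is $f(x,y,z)=a_{11}x^2+a_{22}y^2+a_{33}z^2+2a_{23}yz+2a_{13}xz+2a_{12}xy$ with $a_{ij}\in\mathbb{Z}$, with symmetric matrix $A=(a_{ij})$. Let $\tau=\gcd(a_{11},a_{22},a_{33},a_{23},a_{13},a_{12})$ and $\sigma=\gcd(a_{11},a_{22},a_{33},2a_{23},2a_{13},2a_{12})$. $f$ is primitive if $\tau=1$, properly primitive if $\sigma=\tau=1$, improperly primitive if $\tau=1,\sigma=2$. Let $A_{ij}$ be the $(i,j)$-cofactor of $A$, $\Omega=\gcd(A_{11},A_{22},A_{33},A_{23},A_{13},A_{12})$, and for primitive $f$ define $\Delta$ by $\det(A)=\Delta\Omega^2$; $\Omega,\Delta$ are the invariants of $f$. The reciprocal of $f$ is $F=\frac1\Omega\sum_{i,j}A_{ij}X_iX_j$. A binary form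 with matrix $B$ is represented by $f$ if there is an integer $3\times 2$ matrix $M$ with $M^{t}AM=B$, and properly represented if moreover the $2\times 2$ minors of $M$ are coprime. The binary form $(a,2t,b)$ has matrix $\begin{pmatrix}a&t\\t&b\end{pmatrix}$. *)

From mathcomp Require Import all_boot all_order all_algebra.
Set Implicit Arguments. Unset Strict Implicit. Unset Printing Implicit Defensive.
Import Order.TTheory GRing.Theory Num.Theory.
Local Open Scope ring_scope.

(* Ternary (3x3) and binary (2x2) integral quadratic forms are represented by
   their symmetric integer matrices A = (a_ij); indices are 0-based here. *)

Definition ent (n : nat) (A : 'M[int]_n.+1) (i j : nat) : int := A (inord i) (inord j).

Definition symmx (n : nat) (A : 'M[int]_n) : Prop := A^T = A.

Definition pos_def (n : nat) (A : 'M[int]_n) : Prop :=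
  forall x : 'cV[int]_n, x != 0 -> 0 < (x^T *m A *m x) ord0 ord0.

Definition gcd6 (a b c d e f : int) : int :=
  gcdz a (gcdz b (gcdz c (gcdz d (gcdz e f)))).

Definition tau3 (A : 'M[int]_3) : int :=
  gcd6 (ent A 0 0) (ent A 1 1) (ent A 2 2) (ent A 1 2) (ent A 0 2) (ent A 0 1).
Definition sigma3 (A : 'M[int]_3) : int :=
  gcd6 (ent A 0 0) (ent A 1 1) (ent A 2 2)
       (2 * ent A 1 2) (2 * ent A 0 2) (2 * ent A 0 1).

Definition primitive3 (A : 'M[int]_3) : Prop := tau3 A = 1.
Definition properly_primitive3 (A : 'M[int]_3) : Prop := tau3 A = 1 /\ sigma3 A = 1.
Definition improperly_primitive3 (A : 'M[int]_3) : Prop := tau3 A = 1 /\ sigma3 A = 2.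

Definition cof3 (A : 'M[int]_3) (i j : nat) : int := cofactor A (inord i) (inord j).

Definition Omega3 (A : 'M[int]_3) : int :=
  gcd6 (cof3 A 0 0) (cof3 A 1 1) (cof3 A 2 2) (cof3 A 1 2) (cof3 A 0 2) (cof3 A 0 1).

Definition has_invariants (A : 'M[int]_3) (Om De : int) : Prop :=
  Omega3 A = Om /\ \det A = De * Om ^+ 2.

Definition reciprocal3 (A : 'M[int]_3) : 'M[int]_3 :=
  \matrix_(i, j) ((cofactor A i j) %/ Omega3 A)%Z.

(* binary form (a, 2t, b) with matrix [[a, t], [t, b]] *)
Definition binmx (a t b : int) : 'M[int]_2 :=
  \matrix_(i, j) (if (i == ord0) && (j == ord0) then a
                  else if (i != ord0) && (j != ord0) then b else t).

Definition minor2 (M : 'M[int]_(3, 2)) (i k : nat) : int :=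
  M (inord i) ord0 * M (inord k) ord_max - M (inord k) ord0 * M (inord i) ord_max.

Definition represents (A : 'M[int]_3) (B : 'M[int]_2) : Prop :=
  exists M : 'M[int]_(3, 2), M^T *m A *m M = B.

Definition properly_represents (A : 'M[int]_3) (B : 'M[int]_2) : Prop :=
  exists M : 'M[int]_(3, 2), M^T *m A *m M = B /\
    gcdz (minor2 M 0 1) (gcdz (minor2 M 0 2) (minor2 M 1 2)) = 1.

(* Put f = [[a, t, u], [t, b, v], [u, v, w]] and F = [[f11, f12, S], [f12, f22, R], [S, R, C]],
   where C f11 = S^2 + De b, C f22 = R^2 + De a and C f12 = R S - De t are the assumed
   congruences. Taking C u = -(t R + a S), C v = -(b R + t S) and
   C^2 w = De Om C + b R^2 + 2 t R S + a S^2 makes the cofactor matrix of f equal to Om F,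
   so det f = De Om^2 and F is the reciprocal of f. These u, v, w are integers: write C = 2c
   with c odd (all that is used of the hypothesis on C); a common divisor of C, R, S divides
   De a, De t and De b, hence gcd(a, 2t, b) = 4, so c is coprime to gcd(R, S). The same fact
   and the 2-adic hypotheses (4 | a, b; t = 2 mod 4; De odd), which make f11, f22 even and
   f12, w odd, show that f is properly and F improperly primitive. Positivity follows from
   a > 0, a b - t^2 = Om C > 0 and det f > 0. *)

From mathcomp Require Import all_boot all_order all_algebra.
From mathcomp Require Import ring.

Set Implicit Arguments.
Unset Strict Implicit.
Unset Printing Implicit Defensive.
Import Order.TTheory GRing.Theory Num.Theory.
Local Open Scope ring_scope.

Lemma coprimez2_odd w : ~~ (2 %| w)%Z -> coprimez 2 w.
Proof. by rewrite coprimezE coprime2n -[odd _]negbK -dvdn2. Qed.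

Lemma gcdz_eq1 m n : (gcdz m n %| 1)%Z -> gcdz m n = 1.
Proof. by rewrite /gcdz dvdz1 => /eqP /= ->. Qed.

Lemma dvdz2_sqr x : (2 %| x ^+ 2)%Z = (2 %| x)%Z.
Proof. by rewrite !dvdzE abszX /= Euclid_dvdX // andbT. Qed.

Lemma dvdz_mul2_odd m c x :
  m != 0 -> ~~ (2 %| c)%Z -> (m * 2 %| m * c * x)%Z = (2 %| x)%Z.
Proof. by move=> m_neq0 c_odd; rewrite -mulrA dvdz_mul2l // Gauss_dvdzr ?coprimez2_odd. Qed.

Lemma odd_of_mul_eq_minor w De f11 f22 f12 :
  w * De = f11 * f22 - f12 ^+ 2 -> (2 %| f11)%Z -> ~~ (2 %| f12)%Z -> ~~ (2 %| w)%Z.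
Proof.
move=> eq_w f11_even; apply: contra => w_even.
by rewrite -dvdz2_sqr -(rpredBl _ (dvdz_mulr f22 f11_even)) -eq_w dvdz_mulr.
Qed.

Lemma dvdz_gcd6 d x1 x2 x3 x4 x5 x6 :
  (d %| gcd6 x1 x2 x3 x4 x5 x6)%Z =
  [&& (d %| x1)%Z, (d %| x2)%Z, (d %| x3)%Z, (d %| x4)%Z, (d %| x5)%Z & (d %| x6)%Z].
Proof. by rewrite /gcd6 !dvdz_gcd. Qed.

Lemma gcd6_mull m x1 x2 x3 x4 x5 x6 : 0 <= m ->
  gcd6 (m * x1) (m * x2) (m * x3) (m * x4) (m * x5) (m * x6) = m * gcd6 x1 x2 x3 x4 x5 x6.
Proof. by move=> m_ge0; rewrite /gcd6; do 5 rewrite -mulz_gcdr gez0_abs //. Qed.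

Lemma gcd6_double_even (x1 x2 x3 x4 x5 x6 : int) :
  gcd6 x1 x2 x3 x4 x5 x6 = 1 -> (2 %| x1)%Z -> (2 %| x2)%Z -> (2 %| x3)%Z ->
  gcd6 x1 x2 x3 (2 * x4) (2 * x5) (2 * x6) = 2.
Proof.
move=> gcd1 e1 e2 e3; set G := gcd6 _ _ _ _ _ _.
have dvd_G2 : (G %| 2 * gcd6 x1 x2 x3 x4 x5 x6)%Z.
  have := dvdzz G; rewrite {2}/G dvdz_gcd6 => /and5P[d1 d2 d3 d4 /andP[d5 d6]].
  by rewrite -gcd6_mull // dvdz_gcd6 d4 d5 d6 !dvdz_mull.
rewrite gcd1 mulr1 in dvd_G2.
have dvd_2G : (2 %| G)%Z by rewrite dvdz_gcd6 e1 e2 e3 !dvdz_mulr.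
rewrite /G /gcd6 /gcdz; congr Posz; apply/eqP; rewrite eqn_dvd.
by apply/andP; split; [exact: dvd_G2 | exact: dvd_2G].
Qed.

Lemma det_mx2 (R : comPzRingType) (B : 'M[R]_2) : \det B = B 0 0 * B 1 1 - B 0 1 * B 1 0.
Proof.
rewrite (expand_det_row _ 0) !big_ord_recr big_ord0 /= /cofactor !det_mx11 !mxE /=.
rewrite expr0 expr1 add0r mul1r.
have -> : lift 0 0 = 1 :> 'I_2 by apply/val_inj.
have -> : lift (widen_ord (leqnSn 1) ord_max) 0 = 1 :> 'I_2 by apply/val_inj.
have -> : lift ord_max 0 = 0 :> 'I_2 by apply/val_inj.
have -> : widen_ord (leqnSn 1) ord_max = 0 :> 'I_2 by apply/val_inj.
have -> : ord_max = 1 :> 'I_2 by apply/val_inj.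
ring.
Qed.

Definition symmx3 (a11 a22 a33 a23 a13 a12 : int) : 'M[int]_3 :=
  \matrix_(i, j) match nat_of_ord i, nat_of_ord j with
                 | 0, 0 => a11 | 1, 1 => a22 | 2, 2 => a33
                 | 1, 2 | 2, 1 => a23 | 0, 2 | 2, 0 => a13 | _, _ => a12 end.

Lemma sum_ord3 (R : nmodType) (F : 'I_3 -> R) :
  \sum_j F j = F (inord 0) + F (inord 1) + F (inord 2).
Proof.
rewrite !big_ord_recr big_ord0 /= add0r.
by congr (F _ + F _ + F _); apply/val_inj; rewrite /= inordK.
Qed.

Lemma sum_ord2 (R : nmodType) (F : 'I_2 -> R) : \sum_j F j = F 0 + F 1.
Proof. by rewrite !big_ord_recr big_ord0 /= add0r; congr (F _ + F _); apply/val_inj. Qed.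

Section SymmetricTernary.
Variables a11 a22 a33 a23 a13 a12 : int.
Local Notation A := (symmx3 a11 a22 a33 a23 a13 a12).

Local Ltac expand := rewrite !mxE /= ?inordK //= /bump /=.

Lemma cof3_symmx3_00 : cof3 A 0 0 = a22 * a33 - a23 ^+ 2.
Proof. rewrite /cof3 /cofactor det_mx2; expand; ring. Qed.
Lemma cof3_symmx3_11 : cof3 A 1 1 = a11 * a33 - a13 ^+ 2.
Proof. rewrite /cof3 /cofactor det_mx2; expand; ring. Qed.
Lemma cof3_symmx3_22 : cof3 A 2 2 = a11 * a22 - a12 ^+ 2.
Proof. rewrite /cof3 /cofactor det_mx2; expand; ring. Qed.
Lemma cof3_symmx3_12 : cof3 A 1 2 = a12 * a13 - a11 * a23.
Proof. rewrite /cof3 /cofactor det_mx2; expand; ring. Qed.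
Lemma cof3_symmx3_02 : cof3 A 0 2 = a12 * a23 - a22 * a13.
Proof. rewrite /cof3 /cofactor det_mx2; expand; ring. Qed.
Lemma cof3_symmx3_01 : cof3 A 0 1 = a13 * a23 - a12 * a33.
Proof. rewrite /cof3 /cofactor det_mx2; expand; ring. Qed.

Lemma det_symmx3 : \det A = a11 * cof3 A 0 0 + a12 * cof3 A 0 1 + a13 * cof3 A 0 2.
Proof. by rewrite (expand_det_row _ (inord 0)) sum_ord3 /cof3; expand. Qed.

Lemma tau3_symmx3 : tau3 A = gcd6 a11 a22 a33 a23 a13 a12.
Proof. by rewrite /tau3 /ent; expand. Qed.

Lemma sigma3_symmx3 : sigma3 A = gcd6 a11 a22 a33 (2 * a23) (2 * a13) (2 * a12).
Proof. by rewrite /sigma3 /ent; expand. Qed.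

Lemma symmx3_sym : symmx A.
Proof.
apply/matrixP => i j; rewrite !mxE.
by case: i j => [[|[|[|//]]] ?] [[|[|[|//]]] ?].
Qed.

Lemma qform_symmx3 (x : 'cV[int]_3) : (x^T *m A *m x) 0 0 =
  let y0 := x (inord 0) 0 in let y1 := x (inord 1) 0 in let y2 := x (inord 2) 0 in
  a11 * y0 ^+ 2 + a22 * y1 ^+ 2 + a33 * y2 ^+ 2
    + 2 * a23 * y1 * y2 + 2 * a13 * y0 * y2 + 2 * a12 * y0 * y1.
Proof. rewrite !mxE sum_ord3 !mxE !sum_ord3; expand; ring. Qed.

End SymmetricTernary.

Lemma col3_eq0 (R : nmodType) (x : 'cV[R]_3) :
  x (inord 0) 0 = 0 -> x (inord 1) 0 = 0 -> x (inord 2) 0 = 0 -> x = 0.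
Proof.
move=> x0 x1 x2; apply/matrixP => i j; rewrite (ord1 j) !mxE.
by case: i => [[|[|[|//]]] ?]; [rewrite -x0 | rewrite -x1 | rewrite -x2];
  congr (x _ _); apply/val_inj; rewrite /= inordK.
Qed.

Lemma pos_def_symmx3 (a11 a22 a33 a23 a13 a12 : int) :
  let A := symmx3 a11 a22 a33 a23 a13 a12 in
  0 < a11 -> 0 < cof3 A 2 2 -> 0 < \det A -> pos_def A.
Proof.
move=> A a11_gt0 c22_gt0 det_gt0 x x_neq0; rewrite qform_symmx3 /=.
set y0 := x (inord 0) 0; set y1 := x (inord 1) 0; set y2 := x (inord 2) 0.
set c22 := cof3 A 2 2; set c12 := cof3 A 1 2; set L := a11 * y0 + a12 * y1 + a13 * y2.
(* Lagrange's reduction: complete the square in y0, then in y1. *)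
have reduction : a11 * c22 * (a11 * y0 ^+ 2 + a22 * y1 ^+ 2 + a33 * y2 ^+ 2
      + 2 * a23 * y1 * y2 + 2 * a13 * y0 * y2 + 2 * a12 * y0 * y1) =
    c22 * L ^+ 2 + (c22 * y1 - c12 * y2) ^+ 2 + a11 * \det A * y2 ^+ 2.
  by rewrite /L /c22 /c12 det_symmx3 cof3_symmx3_00 cof3_symmx3_01 cof3_symmx3_02
    cof3_symmx3_12 cof3_symmx3_22; ring.
rewrite -(pmulr_rgt0 _ (mulr_gt0 a11_gt0 c22_gt0)) reduction.
have sq_gt0 (z : int) : z != 0 -> 0 < z ^+ 2.
  by move=> z_neq0; rewrite exprn_even_gt0 // z_neq0 orbT.
have L_ge0 : 0 <= c22 * L ^+ 2 by rewrite mulr_ge0 ?sqr_ge0 ?ltW.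
have [y2_eq0|/sq_gt0 y2_gt0] := eqVneq y2 0; last first.
  apply: ltr_pwDr; first exact: mulr_gt0 (mulr_gt0 a11_gt0 det_gt0) y2_gt0.
  by rewrite addr_ge0 ?sqr_ge0.
rewrite y2_eq0 expr0n /= !mulr0 subr0 addr0.
have [y1_eq0|y1_neq0] := eqVneq y1 0; last first.
  exact: ltr_pwDr (sq_gt0 _ (mulf_neq0 (lt0r_neq0 c22_gt0) y1_neq0)) L_ge0.
have y0_neq0 : y0 != 0 by apply: contraNneq x_neq0 => y0_eq0; apply/eqP/col3_eq0.
rewrite /L y1_eq0 y2_eq0 !mulr0 !addr0.
exact: mulr_gt0 c22_gt0 (sq_gt0 _ (mulf_neq0 (lt0r_neq0 a11_gt0) y0_neq0)).
Qed.

Lemma pos_def_binmx_gt0 (a t b : int) : pos_def (binmx a t b) -> 0 < a.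
Proof.
move=> /(_ (\col_i (i == 0)%:R)); rewrite !mxE sum_ord2 !mxE !sum_ord2 !mxE /=.
rewrite !mulr0 !mul0r !addr0 !mulr1 mul1r; apply.
by apply/eqP => /matrixP/(_ 0 0); rewrite !mxE.
Qed.

Lemma symmx3_properly_represents (a t b a33 a23 a13 : int) :
  properly_represents (symmx3 a b a33 a23 a13 t) (binmx a t b).
Proof.
exists (\matrix_(i < 3, j < 2) (i == j :> nat)%:R); split.
  by apply/matrixP => i j; rewrite !mxE sum_ord3 !mxE !sum_ord3 !mxE /= ?inordK //;
    case: i j => [[|[|//]] ?] [[|[|//]] ?] /=; ring.
by rewrite /minor2 !mxE !inordK //= mulr1 mulr0 subr0 gcd1z.
Qed.

Lemma symmx3_properly_primitive (a t b w v u : int) :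
  gcdz a (gcdz (2 * t) b) = 4 -> ~~ (2 %| w)%Z -> properly_primitive3 (symmx3 a b w v u t).
Proof.
move=> gcd_a2tb w_odd.
have unit_of_dvd d : (d %| a)%Z -> (d %| 2 * t)%Z -> (d %| b)%Z -> (d %| w)%Z -> (d %| 1)%Z.
  move=> da d2t db dw; have /eqP gcd4w : coprimez 4 w := coprimezXl 2 (coprimez2_odd w_odd).
  apply: (@dvdz_trans (gcdz 4 w)); last by rewrite gcd4w.
  by rewrite dvdz_gcd dw -gcd_a2tb !dvdz_gcd da d2t db.
rewrite /properly_primitive3 tau3_symmx3 sigma3_symmx3; split; apply: gcdz_eq1.
- have := dvdzz (gcd6 a b w v u t); rewrite dvdz_gcd6 => /and5P[da db dw _ /andP[_ dt]].
  exact: unit_of_dvd da (dvdz_mull _ dt) db dw.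
- have := dvdzz (gcd6 a b w (2 * v) (2 * u) (2 * t)).
  rewrite dvdz_gcd6 => /and5P[da db dw _ /andP[_ d2t]].
  exact: unit_of_dvd da d2t db dw.
Qed.

Lemma ent_reciprocal3 (A : 'M[int]_3) i j :
  ent (reciprocal3 A) i j = (cof3 A i j %/ Omega3 A)%Z.
Proof. by rewrite /ent mxE. Qed.

Section FormFromCongruences.
Variables a t b Om C De R S u v w f11 f22 f12 : int.
Hypotheses (disc : Om * C = a * b - t ^+ 2) (C_neq0 : C != 0).
Hypotheses (eq_u : - (t * R + a * S) = u * C) (eq_v : - (b * R + t * S) = v * C).
Hypothesis eq_w : De * (Om * C) + (b * R ^+ 2 + 2 * t * R * S + a * S ^+ 2) = w * C ^+ 2.
Hypotheses (eq_f11 : S ^+ 2 + De * b = f11 * C) (eq_f22 : R ^+ 2 + De * a = f22 * C).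
Hypothesis eq_f12 : R * S - De * t = f12 * C.

Local Notation f := (symmx3 a b w v u t).

Let C2_neq0 : C ^+ 2 != 0 := expf_neq0 2 C_neq0.

Lemma cof3_form00 : cof3 f 0 0 = Om * f11.
Proof.
rewrite cof3_symmx3_00; apply: (mulIf C2_neq0).
transitivity (b * (w * C ^+ 2) - (v * C) ^+ 2); first by ring.
transitivity ((Om * C) * (f11 * C)); last by ring.
by rewrite -eq_w -eq_v -eq_f11 disc; ring.
Qed.

Lemma cof3_form11 : cof3 f 1 1 = Om * f22.
Proof.
rewrite cof3_symmx3_11; apply: (mulIf C2_neq0).
transitivity (a * (w * C ^+ 2) - (u * C) ^+ 2); first by ring.
transitivity ((Om * C) * (f22 * C)); last by ring.
by rewrite -eq_w -eq_u -eq_f22 disc; ring.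
Qed.

Lemma cof3_form22 : cof3 f 2 2 = Om * C.
Proof. by rewrite cof3_symmx3_22 disc. Qed.

Lemma cof3_form12 : cof3 f 1 2 = Om * R.
Proof.
rewrite cof3_symmx3_12; apply: (mulIf C_neq0).
transitivity (t * (u * C) - a * (v * C)); first by ring.
transitivity ((Om * C) * R); last by ring.
by rewrite -eq_u -eq_v disc; ring.
Qed.

Lemma cof3_form02 : cof3 f 0 2 = Om * S.
Proof.
rewrite cof3_symmx3_02; apply: (mulIf C_neq0).
transitivity (t * (v * C) - b * (u * C)); first by ring.
transitivity ((Om * C) * S); last by ring.
by rewrite -eq_u -eq_v disc; ring.
Qed.

Lemma cof3_form01 : cof3 f 0 1 = Om * f12.
Proof.
rewrite cof3_symmx3_01; apply: (mulIf C2_neq0).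
transitivity ((u * C) * (v * C) - t * (w * C ^+ 2)); first by ring.
transitivity ((Om * C) * (f12 * C)); last by ring.
by rewrite -eq_w -eq_u -eq_v -eq_f12 disc; ring.
Qed.

Lemma det_form : \det f = De * Om ^+ 2.
Proof.
rewrite det_symmx3 cof3_form00 cof3_form01 cof3_form02; apply: (mulIf C_neq0).
transitivity (Om * (a * (f11 * C) + t * (f12 * C) + (u * C) * S)); first by ring.
transitivity (Om * De * (Om * C)); last by ring.
by rewrite -eq_f11 -eq_f12 -eq_u disc; ring.
Qed.

Hypothesis gcd_recip : gcd6 f11 f22 C R S f12 = 1.

Lemma Omega3_form : 0 <= Om -> Omega3 f = Om.
Proof.
move=> Om_ge0; rewrite /Omega3 cof3_form00 cof3_form11 cof3_form22 cof3_form12.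
by rewrite cof3_form02 cof3_form01 gcd6_mull // gcd_recip mulr1.
Qed.

Lemma reciprocal3_form_improperly_primitive :
  0 < Om -> (2 %| f11)%Z -> (2 %| f22)%Z -> (2 %| C)%Z ->
  improperly_primitive3 (reciprocal3 f).
Proof.
move=> Om_gt0 e11 e22 eC; rewrite /improperly_primitive3 /tau3 /sigma3.
rewrite !ent_reciprocal3 Omega3_form ?ltW // cof3_form00 cof3_form11 cof3_form22.
rewrite cof3_form12 cof3_form02 cof3_form01 !mulKz ?lt0r_neq0 //.
by split; last exact: gcd6_double_even.
Qed.

Lemma pos_def_form : 0 < a -> 0 < C -> 0 < Om -> 0 < De -> pos_def f.
Proof.
move=> a_gt0 C_gt0 Om_gt0 De_gt0; apply: pos_def_symmx3 => //.
  by rewrite cof3_form22 mulr_gt0.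
by rewrite det_form mulr_gt0 // exprn_gt0.
Qed.
End FormFromCongruences.

Section Congruences.
Variables a t b Om C De R S c : int.
Hypotheses (disc : Om * C = a * b - t ^+ 2) (gcd_a2tb : gcdz a (gcdz (2 * t) b) = 4).
Hypotheses (Cc : C = 2 * c) (c_odd : ~~ (2 %| c)%Z) (coprime_CDe : coprimez C De).
Hypotheses (congrR : (C %| R ^+ 2 + De * a)%Z) (congrRS : (C %| R * S - De * t)%Z).
Hypothesis congrS : (C %| S ^+ 2 + De * b)%Z.

Lemma dvd4_a : (4 %| a)%Z. Proof. by rewrite -gcd_a2tb dvdz_gcdl. Qed.
Lemma dvd4_b : (4 %| b)%Z.
Proof. by rewrite -gcd_a2tb; apply: dvdz_trans (dvdz_gcdr _ _) (dvdz_gcdr _ _). Qed.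

Lemma gcdCRS_dvd4 : (gcdz C (gcdz R S) %| 4)%Z.
Proof.
set g := gcdz C _.
have gC : (g %| C)%Z := dvdz_gcdl _ _.
have gR : (g %| R)%Z := dvdz_trans (dvdz_gcdr _ _) (dvdz_gcdl _ _).
have gS : (g %| S)%Z := dvdz_trans (dvdz_gcdr _ _) (dvdz_gcdr _ _).
have g_dvd x y : (g %| x)%Z -> (C %| x + De * y)%Z -> (g %| y)%Z.
  move=> gx Cxy; rewrite -(Gauss_dvdzr _ (coprimez_dvdl (dvdz_gcdl C _) coprime_CDe)).
  by rewrite -(rpredDl _ gx) (dvdz_trans gC Cxy).
have ga : (g %| a)%Z by apply: g_dvd congrR; rewrite dvdz_exp.
have gb : (g %| b)%Z by apply: g_dvd congrS; rewrite dvdz_exp.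
have gt : (g %| t)%Z.
  rewrite -rpredN; apply: (g_dvd (R * S)); first exact: dvdz_mull.
  by rewrite mulrN.
apply: (@dvdz_trans (gcdz a (gcdz (2 * t) b))); last by rewrite gcd_a2tb.
by rewrite !dvdz_gcd ga gb dvdz_mull.
Qed.

Lemma coprime_c_gcdRS : coprimez c (gcdz R S).
Proof.
apply/eqP/gcdz_eq1; have c_dvdC : (c %| C)%Z by rewrite Cc dvdz_mull.
apply: (@dvdz_trans (gcdz 4 c)).
  rewrite dvdz_gcd dvdz_gcdl andbT; apply: dvdz_trans gcdCRS_dvd4.
  by rewrite dvdz_gcd dvdz_gcdr andbT (dvdz_trans (dvdz_gcdl _ _) c_dvdC).
by rewrite (eqP (coprimezXl 2 (coprimez2_odd c_odd))).
Qed.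

Lemma dvdC_of_dvdC_mulRS Y : (C %| R * Y)%Z -> (C %| S * Y)%Z -> (2 %| Y)%Z -> (C %| Y)%Z.
Proof.
move=> CRY CSY Y_even; rewrite Cc Gauss_dvdz ?coprimez2_odd // Y_even /=.
have c_dvdC : (c %| C)%Z by rewrite Cc dvdz_mull.
have : (c %| gcdz R S * `|Y|%:Z)%Z by rewrite mulz_gcdl dvdz_gcd !(dvdz_trans c_dvdC).
by rewrite Gauss_dvdzr ?coprime_c_gcdRS.
Qed.

Lemma even_of_congr x y : (C %| x ^+ 2 + De * y)%Z -> (4 %| y)%Z -> (2 %| x)%Z.
Proof.
move=> Cxy y4; have De_y_even : (2 %| De * y)%Z by rewrite dvdz_mull // (dvdz_trans _ y4).
by rewrite -dvdz2_sqr -(rpredDr _ De_y_even) (dvdz_trans _ Cxy) // Cc dvdz_mulr.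
Qed.

Lemma dvdC_tR_aS : (C %| t * R + a * S)%Z.
Proof.
apply: dvdC_of_dvdC_mulRS.
- have -> : R * (t * R + a * S) = t * (R ^+ 2 + De * a) + a * (R * S - De * t) by ring.
  by rewrite rpredD ?dvdz_mull.
- have -> : S * (t * R + a * S) =
      t * (R * S - De * t) + a * (S ^+ 2 + De * b) - De * Om * C by rewrite -mulrA disc; ring.
  by rewrite rpredB ?rpredD ?dvdz_mull ?dvdzz.
- apply: rpredD; first exact: dvdz_mull _ (even_of_congr congrR dvd4_a).
  exact: dvdz_mulr _ (dvdz_trans _ dvd4_a).
Qed.

Lemma dvdC_bR_tS : (C %| b * R + t * S)%Z.
Proof.
apply: dvdC_of_dvdC_mulRS.
- have -> : R * (b * R + t * S) =
      b * (R ^+ 2 + De * a) + t * (R * S - De * t) - De * Om * C by rewrite -mulrA disc; ring.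
  by rewrite rpredB ?rpredD ?dvdz_mull ?dvdzz.
- have -> : S * (b * R + t * S) = b * (R * S - De * t) + t * (S ^+ 2 + De * b) by ring.
  by rewrite rpredD ?dvdz_mull.
- apply: rpredD; last exact: dvdz_mull _ (even_of_congr congrS dvd4_b).
  exact: dvdz_mulr _ (dvdz_trans _ dvd4_b).
Qed.

Lemma dvd4_C_mul x : (4 %| C * x)%Z = (2 %| x)%Z.
Proof. by rewrite Cc; apply: dvdz_mul2_odd. Qed.

Lemma even_congr_quotient x y f : x ^+ 2 + De * y = f * C -> (4 %| y)%Z -> (2 %| f)%Z.
Proof.
move=> eq_f y4; have x_even : (2 %| x)%Z.
  by apply: (even_of_congr (y := y)) y4; rewrite eq_f dvdz_mull.
rewrite -dvd4_C_mul mulrC -eq_f; apply: rpredD; last exact: dvdz_mull _ y4.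
exact: dvdz_exp2r 2 x_even.
Qed.

Hypotheses (De_odd : ~~ (2 %| De)%Z) (t_not4 : ~~ (4 %| t)%Z).

Lemma odd_congr_quotient f : R * S - De * t = f * C -> ~~ (2 %| f)%Z.
Proof.
move=> eq_f; rewrite -dvd4_C_mul mulrC -eq_f rpredBl; last first.
  exact: dvdz_mul (even_of_congr congrR dvd4_a) (even_of_congr congrS dvd4_b).
by rewrite Gauss_dvdzr // (coprimezXl 2 (coprimez2_odd De_odd)).
Qed.

Lemma gcd_reciprocal_eq1 f11 f22 f12 : ~~ (2 %| f12)%Z -> gcd6 f11 f22 C R S f12 = 1.
Proof.
move=> f12_odd; set G := gcd6 _ _ _ _ _ _; apply: gcdz_eq1; rewrite -/G.
have := dvdzz G; rewrite {2}/G dvdz_gcd6 => /and5P[_ _ GC GR /andP[GS Gf12]].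
have G_odd : ~~ (2 %| G)%Z by apply: contra f12_odd => /dvdz_trans; apply.
have Gc : (G %| c)%Z.
  by rewrite -(Gauss_dvdzr _ (_ : coprimez G 2)) -?Cc // coprimez_sym coprimez2_odd.
apply: (@dvdz_trans (gcdz c (gcdz R S))); first by rewrite !dvdz_gcd Gc GR GS.
by rewrite (eqP coprime_c_gcdRS).
Qed.

Lemma reciprocal_data : exists u v w f11 f22 f12 : int,
  [/\ - (t * R + a * S) = u * C, - (b * R + t * S) = v * C,
      De * (Om * C) + (b * R ^+ 2 + 2 * t * R * S + a * S ^+ 2) = w * C ^+ 2,
      [/\ S ^+ 2 + De * b = f11 * C, R ^+ 2 + De * a = f22 * C & R * S - De * t = f12 * C] &
      [/\ ~~ (2 %| w)%Z, (2 %| f11)%Z, (2 %| f22)%Z & gcd6 f11 f22 C R S f12 = 1]].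
Proof.
have [u eq_u] := dvdzP (rpredNr dvdC_tR_aS); have [v eq_v] := dvdzP (rpredNr dvdC_bR_tS).
have [f11 eq_f11] := dvdzP congrS; have [f22 eq_f22] := dvdzP congrR.
have [f12 eq_f12] := dvdzP congrRS.
set N := De * (Om * C) + _.
(* The reciprocal of F is De times f, so [w * De] is the cofactor [f11 f22 - f12^2] of F. *)
have N_De : N * De = (f11 * f22 - f12 ^+ 2) * C ^+ 2.
  transitivity ((S ^+ 2 + De * b) * (R ^+ 2 + De * a) - (R * S - De * t) ^+ 2).
    by rewrite /N disc; ring.
  by rewrite eq_f11 eq_f22 eq_f12; ring.
have [w eq_w] : exists w, N = w * C ^+ 2.
  apply/dvdzP; rewrite -(Gauss_dvdzl _ (coprimezXl 2 coprime_CDe)) N_De.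
  exact: dvdz_mull _ (dvdzz _).
have C2_neq0 : C ^+ 2 != 0 by rewrite Cc expf_neq0 // mulf_neq0 //; apply: contraNneq c_odd => ->.
have w_De : w * De = f11 * f22 - f12 ^+ 2 by apply: (mulIf C2_neq0); rewrite -N_De eq_w; ring.
have f11_even := even_congr_quotient eq_f11 dvd4_b.
have f12_odd := odd_congr_quotient eq_f12.
exists u, v, w, f11, f22, f12; split => //; split => //.
- exact: odd_of_mul_eq_minor w_De f11_even f12_odd.
- exact: even_congr_quotient eq_f22 dvd4_a.
- exact: gcd_reciprocal_eq1.
Qed.
End Congruences.

Theorem mainTheorem2 (a t b Om C De : int) :
  pos_def (binmx a t b) ->
  (2 * t) ^+ 2 - 4 * a * b = - (4 * Om * C) ->
  - (4 * Om * C) < 0 ->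
  (2 %| t)%Z -> ~~ (4 %| t)%Z ->
  gcdz a (gcdz (2 * t) b) = 4 ->
  (C = 2 \/ exists p : nat, [/\ prime p, odd p & C = 2 * p%:Z]) ->
  0 < Om -> (2 %| Om)%Z ->
  0 < De -> ~~ (2 %| De)%Z -> gcdz C De = 1 ->
  (exists R S : int, [/\ (C %| R ^+ 2 + De * a)%Z,
                         (C %| R * S - De * t)%Z &
                         (C %| S ^+ 2 + De * b)%Z]) ->
  exists A : 'M[int]_3,
    [/\ symmx A, pos_def A, properly_primitive3 A,
        has_invariants A Om De &
        properly_represents A (binmx a t b)] /\
    improperly_primitive3 (reciprocal3 A).
Proof.
(* [2 | t] and [2 | Om] follow from the other hypotheses. *)
move=> pd disc4 disc_lt0 _ t_not4 gcd_a2tb C_shape Om_gt0 _ De_gt0 De_odd gcd_CDe.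
move=> [R [S [congrR congrRS congrS]]].
have a_gt0 := pos_def_binmx_gt0 pd.
have disc : Om * C = a * b - t ^+ 2.
  apply: (@mulfI _ (- 4)) => //; transitivity ((2 * t) ^+ 2 - 4 * a * b); last by ring.
  by rewrite disc4; ring.
have C_gt0 : 0 < C by move: disc_lt0; rewrite oppr_lt0 -mulrA !pmulr_rgt0.
have [c Cc c_odd] : exists2 c, C = 2 * c & ~~ (2 %| c)%Z.
  case: C_shape => [->|[p [_ p_odd ->]]]; first by exists 1.
  by exists p%:Z; rewrite // dvdzE /= dvdn2 p_odd.
have [u [v [w [f11 [f22 [f12 [eq_u eq_v eq_w [eq_f11 eq_f22 eq_f12]]]]]]]] :=
  reciprocal_data disc gcd_a2tb Cc c_odd (introT eqP gcd_CDe) congrR congrRS congrS De_odd t_not4.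
move=> [w_odd f11_even f22_even gcd_recip].
have C_neq0 : C != 0 := lt0r_neq0 C_gt0.
exists (symmx3 a b w v u t); split; first split.
- exact: symmx3_sym.
- exact: pos_def_form disc C_neq0 eq_u eq_v eq_w eq_f11 eq_f12 a_gt0 C_gt0 Om_gt0 De_gt0.
- exact: symmx3_properly_primitive gcd_a2tb w_odd.
- split; last exact: det_form disc C_neq0 eq_u eq_v eq_w eq_f11 eq_f12.
  exact: Omega3_form disc C_neq0 eq_u eq_v eq_w eq_f11 eq_f22 eq_f12 gcd_recip (ltW Om_gt0).
- exact: symmx3_properly_represents.
- apply: reciprocal3_form_improperly_primitive disc C_neq0 eq_u eq_v eq_w eq_f11 eq_f22 eq_f12
    gcd_recip Om_gt0 f11_even f22_even _.
  by rewrite Cc dvdz_mulr.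
Qed.
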